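(* Let $a_1,a_2,\dots$ be a sequence of natural numbers. Assume there are constants $B$ and $C$ such that $a_n\le Bn$ for each $n$, and such that each natural number appears at most $C$ times in the sequence. If $\alpha$ is irrational and the distribution of $\alpha a_n\bmod 1$ converges to a probability measure $\mu$ on the circle, then $\mu$ is absolutely continuous with respect to Lebesgue measure.
   Context: ''The distribution of $\alpha a_n\bmod 1$ converges to $\mu$'' means that $\frac1N\sum_{n=1}^N\delta_{\alpha a_n\bmod 1}$ converges weakly to $\mu$ on $\mathbb{R}/\mathbb{Z}$. *)

From HB Require Import structures.
From mathcomp Require Import all_boot all_order all_algebra.
From mathcomp Require Import all_classical all_reals all_analysis.
Set Implicit Arguments. Unset Strict Implicit. Unset Printing Implicit Defensive.
Import Order.TTheory GRing.Theory Num.Theory.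
Local Open Scope ring_scope.

Definition frac1 {R : realType} (x : R) : R := x - (Num.floor x)%:~R.

From HB Require Import structures.
From mathcomp Require Import all_boot all_order all_algebra.
From mathcomp Require Import all_classical all_reals all_analysis.
From mathcomp Require Import measurable_realfun zify ring lra.
Import Order.TTheory GRing.Theory Num.Theory numFieldNormedType.Exports.
Local Open Scope classical_set_scope.
Local Open Scope ring_scope.

(* It suffices to bound mu ]u, v] by a constant times v - u, since Lebesgue
   measure is the infimum of the total length of countable covers by such
   intervals. For a short interval, take a continuous 1-periodic trapezoid f
   that is 1 on ]u, v] and vanishes outside the 2(v - u)-neighbourhood of v
   modulo 1; its integral against mu is the limit of the averages of
   f (alpha a_n). Because a_n <= B n and no value is taken more than C times,
   the N-th average is at most (C / N) sum_(k <= B N) f (alpha k). Dirichlet's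
   theorem gives theta = q alpha - p with 0 < |theta| <= r, and along each
   progression k, k + q, ..., k + (T - 1) q with T ~ 1 / |theta| the points
   alpha k + j theta enter an r-neighbourhood of c modulo 1 at most
   O(r / |theta|) times, whence sum_(k < M) f (alpha k) <= 30 r M + O(1). *)

Section distance_to_integers.
Context {R : realType}.
Implicit Types (y z : R) (n : int).

Definition nearest_int y : int := Num.floor (y + 2^-1).

Definition dist_int y : R := `|y - (nearest_int y)%:~R|.

Lemma dist_int_le_half y : dist_int y <= 2^-1.
Proof.
have /andP[lo hi] := floor_itv (y + 2^-1); rewrite intrD in hi.
by rewrite /dist_int /nearest_int ler_norml; apply/andP; split; lra.
Qed.

Lemma dist_int_le y n : dist_int y <= `|y - n%:~R|.
Proof.
have [->|ne] := eqVneq n (nearest_int y); first by [].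
have gap : 1 <= `|(n - nearest_int y)%:~R : R|.
  by rewrite -intr_norm ler1z; move: ne; rewrite -subr_eq0; lia.
have := dist_int_le_half y; have := ler_normB (y - (nearest_int y)%:~R) (y - n%:~R).
rewrite (_ : y - _ - (y - _) = (n - nearest_int y)%:~R) /dist_int; last first.
  by rewrite intrB; ring.
lra.
Qed.

Lemma dist_int_lipschitz y z : `|dist_int y - dist_int z| <= `|y - z|.
Proof.
have le_shift u v : dist_int u <= `|u - v| + dist_int v.
  apply: le_trans (dist_int_le u (nearest_int v)) _.
  have -> : u - (nearest_int v)%:~R = (u - v) + (v - (nearest_int v)%:~R) by ring.
  exact: ler_normD.
have := le_shift y z; have := le_shift z y; rewrite (distrC z) => zy yz.
by rewrite ler_norml; apply/andP; split; lra.
Qed.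

Lemma dist_intDz y n : dist_int (y + n%:~R) = dist_int y.
Proof.
apply/eqP; rewrite eq_le; apply/andP; split.
  have := dist_int_le (y + n%:~R) (nearest_int y + n).
  by rewrite intrD (_ : y + _ - _ = y - (nearest_int y)%:~R) //; ring.
have := dist_int_le y (nearest_int (y + n%:~R) - n).
by rewrite intrB (_ : y - _ = y + n%:~R - (nearest_int (y + n%:~R))%:~R) //; ring.
Qed.

End distance_to_integers.

Section counting.
Context {R : realType}.

Lemma leq_add_truncn {m n : nat} {L : R} : `|m%:R - n%:R| < L -> (m <= n + Num.truncn L)%N.
Proof.
move=> mnL; have [mn|nm] := leqP m n; first exact: leq_trans mn (leq_addr _ _).
rewrite -leq_subLR truncn_ge_nat; last exact: le_trans (normr_ge0 _) (ltW mnL).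
by rewrite natrB ?(ltnW nm) // (le_trans (ler_norm _)) ?ltW.
Qed.

Lemma count_near_progression (u th r : R) (s : seq nat) :
  uniq s -> th != 0 -> 0 <= r ->
  (count (fun j : nat => `|u + j%:R * th| < r) s)%:R <= 4 * r / `|th| + 1.
Proof.
move=> s_uniq th0 r_ge0; set P := fun j : nat => _.
have th_gt0 : 0 < `|th| by rewrite normr_gt0.
have [/hasP[j0 _ Pj0]|/hasPn noP] := boolP (has P s); last first.
  rewrite (eq_in_count (a2 := pred0)) ?count_pred0; last by move=> j /noP /negbTE.
  by rewrite ler_wpDl ?divr_ge0 ?mulr_ge0.
set L := 2 * r / `|th|.
have close j : P j -> `|j%:R - j0%:R| < L.
  move=> Pj; rewrite /L ltr_pdivlMr // -normrM.
  rewrite (_ : _ * th = (u + j%:R * th) - (u + j0%:R * th)); last by ring.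
  by apply: le_lt_trans (ler_normB _ _) _; rewrite /P in Pj Pj0; lra.
set K := Num.truncn L.
have sub : {subset seq.filter P s <= iota (j0 - K) (K + K).+1}.
  move=> j; rewrite mem_filter mem_iota => /andP[/close Lj _].
  have := leq_add_truncn Lj; rewrite distrC in Lj; have := leq_add_truncn Lj.
  rewrite -/K; lia.
have := uniq_leq_size (filter_uniq P s_uniq) sub.
rewrite size_iota size_filter -(ler_nat R) => /le_trans; apply.
have : K%:R <= L by rewrite truncn_le divr_ge0 ?mulr_ge0.
rewrite /L -addn1 !natrD; lra.
Qed.

Lemma dist_int_lt_shift (y x r : R) : `|x| <= 1 -> r <= 2^-1 -> dist_int (y + x) < r ->
  exists2 e : int, -1 <= e <= 1 & `|y + x - (nearest_int y + e)%:~R| < r.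
Proof.
move=> x_le1 r_le near; set m := nearest_int (y + x).
exists (m - nearest_int y); last by rewrite (addrC (nearest_int y)) subrK.
have := dist_int_le_half y; rewrite /dist_int -/m in near * => y_half.
have : `|(m - nearest_int y)%:~R : R| < 2.
  rewrite intrB (_ : _ - _ = (y - (nearest_int y)%:~R) + x - (y + x - m%:~R)); last by ring.
  apply: le_lt_trans (ler_normB _ _) _; have := ler_normD (y - (nearest_int y)%:~R) x; lra.
by rewrite -intr_norm (_ : 2 = 2%:~R) // ltr_int; lia.
Qed.

Lemma count_near_int_progression (y th r : R) (s : seq nat) :
  uniq s -> th != 0 -> 0 <= r <= 2^-1 -> {in s, forall j : nat, j%:R * `|th| <= 1} ->
  (count (fun j : nat => dist_int (y + j%:R * th) < r) s)%:R <= 3 * (4 * r / `|th| + 1).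
Proof.
move=> s_uniq th0 /andP[r_ge0 r_le] small.
pose P (e : int) (j : nat) := `|y - (nearest_int y + e)%:~R + j%:R * th| < r.
have countP e : (count (P e) s)%:R <= 4 * r / `|th| + 1 by exact: count_near_progression.
have shift : {in s, forall j, dist_int (y + j%:R * th) < r -> [|| P (-1) j, P 0 j | P 1 j]}.
  move=> j /small jth /dist_int_lt_shift [|//|e e_range near].
    by rewrite normrM normr_nat.
  have Pe : P e j.
    by rewrite /P (_ : y - _ + _ = y + j%:R * th - (nearest_int y + e)%:~R) //; ring.
  have : e = -1 \/ e = 0 \/ e = 1 by lia.
  by case=> [|[|]] e_val; rewrite -e_val Pe ?orbT.
have countU a b : (count (predU a b) s <= count a s + count b s)%N.
  by rewrite -count_predUI leq_addr.
have count_le : (count (fun j : nat => dist_int (y + j%:R * th) < r) s)%:R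
    <= (count (P (-1)) s)%:R + (count (P 0) s)%:R + (count (P 1) s)%:R :> R.
  rewrite -!natrD ler_nat; apply: leq_trans (leq_add (countU _ _) (leqnn _)).
  apply: leq_trans (countU _ _); rewrite -!size_filter.
  apply: uniq_leq_size (filter_uniq _ s_uniq) _ => j; rewrite !mem_filter.
  by move=> /andP[near js]; rewrite js andbT /= -orbA shift.
have := countP (-1); have := countP 0; have := countP 1; lra.
Qed.

End counting.

Section dirichlet.
Context {R : realType}.

Lemma frac1_itv (x : R) : 0 <= frac1 x < 1.
Proof.
have /andP[lo hi] := floor_itv x; rewrite intrD in hi.
by rewrite /frac1; apply/andP; split; lra.
Qed.

Lemma truncn_eq_dist_lt1 (x y : R) : 0 <= x -> 0 <= y -> Num.truncn x = Num.truncn y ->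
  `|x - y| < 1.
Proof.
move=> /truncn_itv /andP[x_lo x_hi] /truncn_itv /andP[y_lo y_hi] eq_xy.
rewrite eq_xy -natr1 in x_lo x_hi; rewrite -natr1 in y_hi.
by rewrite ltr_norml; apply/andP; split; lra.
Qed.

Lemma pigeonhole_close (x : nat -> R) (r : R) : 0 < r -> (forall n, 0 <= x n < 1) ->
  exists i j : nat, (i < j)%N /\ `|x i - x j| < r.
Proof.
move=> r_gt0 x01; set k := Num.truncn r^-1.
have k_gt0 : 0 < k.+1%:R :> R by rewrite ltr0n.
have Kx_ge0 n : 0 <= k.+1%:R * x n by have /andP[] := x01 n; rewrite pmulr_rge0.
pose box (n : 'I_k.+2) : 'I_k.+1 := inord (Num.truncn (k.+1%:R * x n)).
have box_val n : box n = Num.truncn (k.+1%:R * x n) :> nat.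
  rewrite inordK // ltnS truncn_le_nat -[X in _ < X]mulr1 ltr_pM2l //.
  by have /andP[] := x01 n.
have /injectivePn[i [j ne_ij box_ij]] : ~~ injectiveb box.
  by apply/injectiveP => /leq_card; rewrite !card_ord ltnn.
have close : `|x i - x j| < r.
  have := truncn_eq_dist_lt1 _ _ (Kx_ge0 i) (Kx_ge0 j); rewrite -!box_val box_ij.
  rewrite -mulrBr normrM gtr0_norm // -ltr_pdivlMl // mulr1 => /(_ erefl) /lt_trans; apply.
  by rewrite -[r]invrK ltf_pV2 ?posrE ?invr_gt0 // truncnS_gt.
have [lt_ij|lt_ji|eq_ij] := ltngtP i j.
- by exists i, j.
- by exists j, i; rewrite distrC.
- by move: ne_ij; rewrite (val_inj eq_ij) eqxx.
Qed.

Lemma dirichlet_approx {alpha r : R} : (forall q : rat, alpha != ratr q) -> 0 < r ->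
  exists (q : nat) (p : int), (0 < q)%N /\ 0 < `|q%:R * alpha - p%:~R| <= r.
Proof.
move=> alpha_irr r_gt0.
have [i [j [lt_ij close]]] := pigeonhole_close (fun n => frac1 (alpha * n%:R)) _ r_gt0
  (fun n => frac1_itv _).
set p := Num.floor (alpha * j%:R) - Num.floor (alpha * i%:R).
have diff : (j - i)%N%:R * alpha - p%:~R = frac1 (alpha * j%:R) - frac1 (alpha * i%:R).
  by rewrite natrB ?(ltnW lt_ij) // intrB /frac1; ring.
exists (j - i)%N, p; split; first by rewrite subn_gt0.
apply/andP; split; last by rewrite diff distrC ltW.
rewrite normr_gt0.
have q_neq0 : (j - i)%N%:R != 0 :> R by rewrite pnatr_eq0 -lt0n subn_gt0.
move: (alpha_irr (p%:~R / (j - i)%N%:R)); apply: contraNneq => /subr0_eq q_alpha.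
by rewrite fmorph_div rmorph_int rmorph_nat -q_alpha mulrC mulKf.
Qed.

End dirichlet.

Section rotation_sums.
Context {R : realType}.

Lemma sum_le_shift (g : nat -> R) (M m : nat) : (forall k, 0 <= g k <= 1) ->
  \sum_(0 <= k < M) g k <= \sum_(0 <= k < M) g (k + m)%N + m%:R.
Proof.
move=> g01; have g_ge0 k : 0 <= g k by have /andP[] := g01 k.
apply: (@le_trans _ _ (\sum_(0 <= k < m + M) g k)).
  by rewrite [X in _ <= X](big_cat_nat _ (n := M)) ?leq_addl //= lerDl sumr_ge0.
rewrite (big_cat_nat _ (n := m)) ?leq_addr //= addrC lerD //.
  by rewrite -{1}[m]add0n big_addn addKn.
have -> : m%:R = \sum_(0 <= k < m) (1 : R) by rewrite sumr_const_nat subn0.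
by apply: ler_sum => k _; have /andP[] := g01 k.
Qed.

Lemma sum_le_block_average (g : nat -> R) (d T M : nat) (A : R) : (0 < T)%N ->
  (forall k, 0 <= g k <= 1) -> (forall k, \sum_(0 <= j < T) g (k + j * d)%N <= A) ->
  \sum_(0 <= k < M) g k <= M%:R * A / T%:R + (T * d)%:R.
Proof.
move=> T_gt0 g01 block; have T_pos : 0 < T%:R :> R by rewrite ltr0n.
set S := \sum_(0 <= k < M) g k.
have shifted : \sum_(0 <= j < T) S <=
    \sum_(0 <= j < T) (\sum_(0 <= k < M) g (k + j * d)%N + (j * d)%:R).
  by apply: ler_sum => j _; apply: sum_le_shift.
rewrite sumr_const_nat subn0 big_split /= exchange_big /= in shifted.
rewrite -(ler_pM2l T_pos) (_ : _ * (_ + _) = M%:R * A + T%:R * (T * d)%:R); last first.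
  by field; rewrite gt_eqF.
rewrite [T%:R * S]mulr_natl; apply: le_trans shifted _; apply: lerD.
  have -> : M%:R * A = \sum_(0 <= k < M) A by rewrite sumr_const_nat subn0 mulr_natl.
  by apply: ler_sum => k _.
have -> : T%:R * (T * d)%:R = \sum_(0 <= j < T) (T * d)%:R :> R.
  by rewrite sumr_const_nat subn0 mulr_natl.
rewrite big_nat [X in _ <= X]big_nat.
by apply: ler_sum => j /andP[_ lt_jT]; rewrite ler_nat leq_mul2r ltnW ?orbT.
Qed.

Lemma periodicDz (f : R -> R) : (forall x, f (x + 1) = f x) ->
  forall x (n : int), f (x + n%:~R) = f x.
Proof.
move=> f1 x n.
have fDn y (m : nat) : f (y + m%:R) = f y.
  by elim: m => [|m IH]; rewrite ?addr0 // -natr1 addrA f1.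
case: n => n; first exact: fDn.
by rewrite NegzE intrN -[in RHS](subrK n.+1%:R x) fDn.
Qed.

Lemma periodic_frac1 (f : R -> R) : (forall x, f (x + 1) = f x) ->
  forall x, f (frac1 x) = f x.
Proof. by move=> f1 x; rewrite -[in RHS](subrK (Num.floor x)%:~R x) periodicDz. Qed.

Lemma sum_rotation_le {alpha c r : R} {f : R -> R} :
  (forall q : rat, alpha != ratr q) -> 0 < r <= 2^-1 ->
  (forall x, 0 <= f x <= 1) -> (forall x, f (x + 1) = f x) ->
  (forall x, r <= dist_int (x - c) -> f x = 0) ->
  exists E : R, forall M : nat, \sum_(0 <= k < M) f (alpha * k%:R) <= 30 * r * M%:R + E.
Proof.
move=> alpha_irr /andP[r_gt0 r_le] f01 f1 f_supp.
have [q [p [q_gt0 /andP[th_gt0 th_le]]]] := dirichlet_approx alpha_irr r_gt0.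
set th := q%:R * alpha - p%:~R in th_gt0 th_le.
have th0 : th != 0 by rewrite -normr_gt0.
set T := Num.truncn `|th|^-1.
have T_th : T%:R * `|th| <= 1 by rewrite -ler_pdivlMr // div1r truncn_le invr_ge0 ltW.
have T_gt0 : (0 < T)%N by rewrite truncn_gt0 invr_ge1 ?unitfE ?normr_eq0 //; lra.
have block k : \sum_(0 <= j < T) f (alpha * (k + j * q)%N%:R) <= 3 * (4 * r / `|th| + 1).
  apply: le_trans (count_near_int_progression (alpha * k%:R - c) th r (index_iota 0 T)
    (iota_uniq 0 _) th0 _ _); last 2 first.
  - by rewrite (ltW r_gt0).
  - move=> j; rewrite mem_index_iota => /andP[_ lt_jT]; apply: le_trans _ T_th.
    by apply: ler_wpM2r; rewrite ?ler_nat ?(ltnW lt_jT).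
  rewrite -sum1_count natr_sum [X in _ <= X]big_mkcond /=; apply: ler_sum => j _.
  have -> : alpha * (k + j * q)%N%:R = alpha * k%:R + j%:R * th + (j%:Z * p)%:~R.
    by rewrite /th natrD natrM intrM; ring.
  rewrite periodicDz //; case: ltP => [_|far].
    by have /andP[] := f01 (alpha * k%:R + j%:R * th).
  by rewrite f_supp // (_ : _ - c = alpha * k%:R - c + j%:R * th) //; ring.
have block_le : 3 * (4 * r / `|th| + 1) <= 30 * r * T%:R.
  set s := `|th|^-1.
  have rs : 1 <= r * s by rewrite -[r * s]/(r / `|th|) ler_pdivlMr // mul1r.
  have T_ge1 : 1 <= T%:R :> R by rewrite ler1n.
  have s_le : s <= 2 * T%:R by have := truncnS_gt s; rewrite -/T -natr1; lra.
  nra.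
exists (T * q)%N%:R => M.
apply: le_trans (sum_le_block_average _ _ _ M _ T_gt0 (fun k => f01 _) block) _.
rewrite lerD2r ler_pdivrMr ?ltr0n //; have := ler0n R M; nra.
Qed.

End rotation_sums.

Section analysis_facts.
Context {R : realType}.

Lemma lipschitz_continuous (g : R -> R) (k : R) : 0 < k ->
  (forall x y, `|g x - g y| <= k * `|x - y|) -> continuous g.
Proof.
move=> k_gt0 g_lip x; apply/cvgrPdist_lt => e e_gt0.
apply/nbhs_normP; exists (e / k) => [|y /= xy]; first exact: divr_gt0.
by apply: le_lt_trans (g_lip x y) _; rewrite mulrC -ltr_pdivlMr.
Qed.

Lemma cvge_le_add_invn {u : nat -> R} {l : \bar R} {L D : R} :
  (fun N => (u N)%:E) @ \oo --> l -> (forall N, u N <= L + D / N.+1%:R) -> (l <= L%:E)%E.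
Proof.
move=> u_l u_le; apply/lee_addgt0Pr => e e_gt0; apply: (cvge_to_le u_l).
near=> N; rewrite -EFinD lee_fin; apply: le_trans (u_le N) _; rewrite lerD2l.
rewrite ler_pdivrMr ?ltr0n // -natr1 mulrDr mulr1.
have : D <= e * N%:R by rewrite mulrC -ler_pdivrMr //; near: N; exact: nbhs_infty_ger.
lra.
Unshelve. all: by end_near.
Qed.

Local Open Scope ereal_scope.

Lemma measure_setI_conull {d} {T : measurableType d} (mu : {measure set T -> \bar R})
    (A D : set T) :
  measurable A -> measurable D -> mu (~` D) = 0 -> mu A = mu (A `&` D).
Proof.
move=> mA mD mDC0; rewrite (measureDI mu mA mD).
by rewrite (subset_measure0 (measurableD mA mD) (measurableC mD)) ?add0e.
Qed.

Lemma measure_dominates_lebesgue (mu : {measure set (measurableTypeR R) -> \bar R})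
    (K : R) :
  (0 <= K)%R -> (forall u v : R, (u < v)%R -> mu `]u, v]%classic <= (K * (v - u))%:E) ->
  mu `<< (@lebesgue_measure R).
Proof.
move=> K_ge0 mu_itv; apply/null_content_dominatesP => A mA LA0.
apply/eqP; rewrite eq_le measure_ge0 andbT; apply/lee_addgt0Pr => e e_gt0; rewrite add0e.
have K1_gt0 : (0 < K + 1)%R by rewrite ltr_pwDr.
have : lebesgue_measure A < (e / (K + 1))%:E by rewrite LA0 lte_fin divr_gt0.
rewrite /lebesgue_measure /lebesgue_stieltjes_measure /measure_extension /mu_ext.
move=> /ereal_inf_lt[_ [F [mF AF] <-] coverF].
have mF' k : measurable (F k : set (measurableTypeR R)).
  by apply: sub_sigma_algebra; exact: mF.
apply: le_trans (measure_sigma_subadditive mu mF' mA AF) _.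
apply: (@le_trans _ _ (\sum_(0 <= k <oo) (K%:E * wlength idfun (F k)))).
  apply: lee_nneseries => [k _ _|k _]; first exact: measure_ge0.
  have /ocitvP[->|[x x12 ->]] := mF k; first by rewrite measure0 wlength0 mule0.
  by rewrite wlength_itv_bnd ?(ltW x12) // -EFinM mu_itv.
rewrite nneseriesZl; last by move=> k _; exact: wlength_ge0.
apply: le_trans (lee_wpmul2l (K_ge0 : 0 <= K%:E) (ltW coverF)) _.
rewrite -EFinM lee_fin mulrA ler_pdivrMr //.
by have := e_gt0; nra.
Qed.

End analysis_facts.

Section tent.
Context {R : realType}.

Definition clamp01 (u : R) : R := if u <= 0 then 0 else if 1 <= u then 1 else u.

Lemma clamp01_itv u : 0 <= clamp01 u <= 1.
Proof.
rewrite /clamp01; case: ifPn => [_|/negP u_gt0]; first by rewrite lexx ler01.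
by case: ifPn => [_|/negP u_lt1]; [rewrite ler01 lexx | apply/andP; split; lra].
Qed.

Lemma clamp01_lipschitz u v : `|clamp01 u - clamp01 v| <= `|u - v|.
Proof.
have := ler_norm (u - v); have := ler_norm (v - u); rewrite distrC /clamp01 ler_norml.
by case: (lerP u 0); case: (lerP 1 u); case: (lerP v 0); case: (lerP 1 v) => *;
  apply/andP; split; lra.
Qed.

Definition tent (c h x : R) : R := clamp01 (2 - dist_int (x - c) / h).

Lemma tent_itv c h x : 0 <= tent c h x <= 1.
Proof. exact: clamp01_itv. Qed.

Lemma tentD1 c h x : tent c h (x + 1) = tent c h x.
Proof. by rewrite /tent (addrAC x) -(dist_intDz (x - c) 1). Qed.

Lemma tent_continuous c h : 0 < h -> continuous (tent c h).
Proof.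
move=> h_gt0; apply: (lipschitz_continuous _ h^-1); rewrite ?invr_gt0 // => x y.
apply: le_trans (clamp01_lipschitz _ _) _.
rewrite (_ : _ - _ = h^-1 * (dist_int (y - c) - dist_int (x - c))); last by ring.
rewrite normrM gtr0_norm ?invr_gt0 //; apply: ler_wpM2l; first by rewrite invr_ge0 ltW.
apply: le_trans (dist_int_lipschitz _ _) _.
by rewrite (_ : y - c - (x - c) = - (x - y)) ?normrN //; ring.
Qed.

Lemma tent_eq0 c h x : 0 < h -> 2 * h <= dist_int (x - c) -> tent c h x = 0.
Proof.
by move=> h_gt0 far; rewrite /tent /clamp01 ifT // subr_le0 ler_pdivlMr.
Qed.

Lemma tent_eq1 c h x : 0 < h -> `|x - c| <= h -> tent c h x = 1.
Proof.
move=> h_gt0 near; have d_le : dist_int (x - c) / h <= 1.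
  rewrite ler_pdivrMr // mul1r; apply: le_trans (dist_int_le _ 0) _.
  by rewrite subr0.
rewrite /tent /clamp01 ifF; last by apply/negbTE; rewrite -ltNge; lra.
by rewrite ifT //; lra.
Qed.

End tent.

Section equidistribution.
Context {R : realType}.
Variables (a : nat -> nat) (B : R) (C : nat) (alpha : R).
Variable mu : probability (measurableTypeR R) R.
Hypothesis a_le : forall n : nat, (0 < n)%N -> (a n)%:R <= B * n%:R.
Hypothesis a_mult : forall (k : nat) (s : seq nat), uniq s ->
  all (fun n => (0 < n)%N && (a n == k)) s -> (size s <= C)%N.
Hypothesis alpha_irr : forall q : rat, alpha != ratr q.
Hypothesis mu_supp : mu (~` `[0%R, 1%R[) = 0%E.
Hypothesis mu_limit : forall f : R -> R, continuous f -> (forall x, f (x + 1) = f x) ->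
  (fun N : nat => ((N.+1%:R)^-1 * \sum_(1 <= n < N.+2) f (frac1 (alpha * (a n)%:R)))%:E)
    @ \oo --> (\int[mu]_(x in `[0%R, 1%R[) (f x)%:E)%E.

Lemma bound_ge0 : 0 <= B.
Proof. by have := a_le 1 isT; rewrite mulr1; apply: le_trans. Qed.

Lemma sum_comp_le_mult (g : nat -> R) (L M : nat) : (forall k, 0 <= g k) ->
  (forall n, (0 < n < L)%N -> (a n < M)%N) ->
  \sum_(1 <= n < L) g (a n) <= C%:R * \sum_(0 <= k < M) g k.
Proof.
move=> g_ge0 a_lt.
have -> : \sum_(1 <= n < L) g (a n) =
    \sum_(1 <= n < L) \sum_(0 <= k < M) (if k == a n then g k else 0).
  rewrite big_nat [RHS]big_nat; apply: eq_bigr => n /a_lt a_ltM.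
  by rewrite -big_mkcond /= big_nat1_eq /= a_ltM.
rewrite exchange_big /= mulr_sumr; apply: ler_sum => k _.
have -> : \sum_(1 <= n < L) (if k == a n then g k else 0) =
    (count (fun n => k == a n) (index_iota 1 L))%:R * g k.
  rewrite -sum1_count natr_sum mulr_suml [RHS]big_mkcond; apply: eq_bigr => n _.
  by case: ifP; rewrite ?mul1r ?mul0r.
rewrite ler_wpM2r // ler_nat.
have := a_mult k _ (filter_uniq (fun n => k == a n) (iota_uniq 1 (L - 1))).
rewrite size_filter; apply.
apply/allP => n; rewrite mem_filter mem_index_iota => /andP[/eqP -> /andP[n_gt0 _]].
by rewrite n_gt0 eqxx.
Qed.

Lemma average_rotation_le {c r : R} {f : R -> R} : 0 < r <= 2^-1 ->
  (forall x, 0 <= f x <= 1) -> (forall x, f (x + 1) = f x) ->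
  (forall x, r <= dist_int (x - c) -> f x = 0) ->
  exists D : R, forall N : nat,
    (N.+1%:R)^-1 * \sum_(1 <= n < N.+2) f (frac1 (alpha * (a n)%:R))
      <= 30 * C%:R * B * r + D / N.+1%:R.
Proof.
move=> r_range f01 f1 f_supp.
have [E sum_le] := sum_rotation_le alpha_irr r_range f01 f1 f_supp.
exists (C%:R * (30 * r + E)) => N.
have B_ge0 := bound_ge0.
set M := (Num.truncn (B * N.+1%:R)).+1.
have a_ltM n : (0 < n < N.+2)%N -> (a n < M)%N.
  move=> /andP[n_gt0 n_lt]; rewrite ltnS truncn_ge_nat ?mulr_ge0 //.
  by apply: le_trans (a_le _ n_gt0) _; rewrite ler_wpM2l // ler_nat -ltnS.
have M_le : M%:R <= B * N.+1%:R + 1 by rewrite /M -natr1 lerD2r truncn_le mulr_ge0.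
have N_pos : 0 < N.+1%:R :> R by rewrite ltr0n.
rewrite ler_pdivrMl // mulrDr [N.+1%:R * (_ / _)]mulrC divfK ?gt_eqF //.
under eq_bigr do rewrite periodic_frac1 //.
have f_ge0 k : 0 <= f (alpha * k%:R) by have /andP[] := f01 (alpha * k%:R).
apply: le_trans (sum_comp_le_mult _ _ _ f_ge0 a_ltM) _.
apply: le_trans (ler_wpM2l (ler0n _ C) (sum_le M)) _.
have Cr_ge0 : 0 <= C%:R * r by case/andP: r_range => r_gt0 _; rewrite mulr_ge0 // ltW.
nra.
Qed.

Lemma integral_small_support_le (f : R -> R) (c r : R) : 0 < r <= 2^-1 -> continuous f ->
  (forall x, 0 <= f x <= 1) -> (forall x, f (x + 1) = f x) ->
  (forall x, r <= dist_int (x - c) -> f x = 0) ->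
  (\int[mu]_(x in `[0%R, 1%R[) (f x)%:E <= (30 * C%:R * B * r)%:E)%E.
Proof.
move=> r_range f_cont f01 f1 f_supp.
have [D avg_le] := average_rotation_le r_range f01 f1 f_supp.
exact: cvge_le_add_invn (mu_limit _ f_cont f1) avg_le.
Qed.

Lemma measure_itv_le (u v : R) : u < v ->
  (mu `]u, v]%classic <= ((60 * C%:R * B + 4) * (v - u))%:E)%E.
Proof.
move=> lt_uv; have B_ge0 := bound_ge0.
have CB_ge0 : 0 <= 60 * C%:R * B by rewrite mulr_ge0 ?mulr_ge0.
have [short|long] := leP (v - u) 4^-1; last first.
  by apply: le_trans (probability_le1 mu (measurable_itv _)) _; rewrite lee_fin; nra.
set h := v - u in short *; have h_gt0 : 0 < h by rewrite subr_gt0.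
pose D : set (measurableTypeR R) := `[0%R, 1%R[%classic.
have mD : measurable D by exact: measurable_itv.
have mI : measurable (`]u, v]%classic : set (measurableTypeR R)) by exact: measurable_itv.
rewrite (measure_setI_conull mu _ _ mI mD mu_supp) -integral_indic //.
apply: (@le_trans _ _ (\int[mu]_(x in D) (tent v h x)%:E)%E).
  apply: ge0_le_integral => //.
  - by apply/measurable_EFinP; exact: measurable_indic.
  - apply/measurable_EFinP; apply: (measurable_funS measurableT) => //.
    exact: continuous_measurable_fun (tent_continuous v h h_gt0).
  - move=> x _; rewrite lee_fin indicE; case: (boolP (x \in _)) => [|_]; last first.
      by have /andP[] := tent_itv v h x.
    rewrite inE /= in_itv /= => /andP[ux xv]; rewrite tent_eq1 //.
    by rewrite /h ler_norml; apply/andP; split; lra.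
apply: le_trans (integral_small_support_le _ v (2 * h) _ (tent_continuous v h h_gt0)
  (tent_itv v h) (tentD1 v h) (fun x => tent_eq0 v h x h_gt0)) _.
  by apply/andP; split; lra.
by rewrite lee_fin; nra.
Qed.

End equidistribution.

Theorem mainTheorem11 (R : realType) (a : nat -> nat) (B : R) (C : nat)
  (alpha : R) (mu : probability (measurableTypeR R) R) :
  (forall n : nat, (0 < n)%N -> (a n)%:R <= B * n%:R) ->
  (forall (k : nat) (s : seq nat), uniq s ->
     all (fun n => (0 < n)%N && (a n == k)) s -> (size s <= C)%N) ->
  (forall q : rat, alpha != ratr q) ->
  mu (~` `[0%R, 1%R[) = 0%E ->
  (forall f : R -> R, continuous f -> (forall x, f (x + 1) = f x) ->
     (fun N : nat => ((N.+1%:R)^-1 *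
        \sum_(1 <= n < N.+2) f (frac1 (alpha * (a n)%:R)))%:E)
       @ \oo --> (\int[mu]_(x in `[0%R, 1%R[) (f x)%:E)%E) ->
  mu `<< (@lebesgue_measure R).
Proof.
move=> a_le a_mult alpha_irr mu_supp mu_limit.
have B_ge0 := bound_ge0 _ _ a_le.
apply: (measure_dominates_lebesgue _ (60 * C%:R * B + 4)).
  by rewrite addr_ge0 // !mulr_ge0.
exact: (measure_itv_le _ _ _ _ _ a_le a_mult alpha_irr mu_supp mu_limit).
Qed.
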